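(* Fix $N>0$ (packet size in bits), $\epsilon\in(0,1)$ (block error probability) and a minimum blocklength $\hat m>0$. For $m>0$ and $\gamma>0$ let $$F(m,\gamma)=\sqrt{\frac{1}{m}\left(1-\frac{1}{(\gamma+1)^2}\right)}\,\frac{Q^{-1}(\epsilon)}{\ln 2}-\log_2(1+\gamma)+\frac{N}{m},$$ and let $\Gamma(m)$ denote the implicit function defined by $F(m,\Gamma(m))=0$, $\Gamma(m)>0$. If $$\frac{Q^{-1}(\epsilon)}{\sqrt{N}}\le \frac{2\sqrt{\ln 2}}{4-\sqrt{2}}=0.64394\ldots,$$ then the function $m\mapsto m\,\Gamma(m)$ is strictly decreasing on $\{m: m\ge \hat m\}$.
   Context: $Q^{-1}(\cdot)$ is the inverse of the Gaussian Q-function $Q(t)=\frac{1}{\sqrt{2\pi}}\int_t^\infty e^{-u^2/2}\,du$. The equation $F(m,\gamma)=0$ is the finite-blocklength achievable-rate relation $\frac{N}{m}=\log_2(1+\gamma)-\sqrt{\frac1m\big(1-\frac{1}{(1+\gamma)^2}\big)}\frac{Q^{-1}(\epsilon)}{\ln 2}$ for blocklength $m$ and SINR $\gamma$; $\Gamma(m)$ is the SINR required to send $N$ bits in $m$ channel uses with error probability $\epsilon$, and $m\Gamma(m)$ is (proportional to) the corresponding energy. *)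

From Stdlib Require Import Reals.
From Coquelicot Require Import Coquelicot.
Open Scope R_scope.

Definition Qfun (t : R) : R :=
  / sqrt (2 * PI) *
  RInt_gen (fun u => exp (- (u ^ 2) / 2)) (at_point t) (Rbar_locally p_infty).

Definition log2 (x : R) : R := ln x / ln 2.

(* F(m, gamma) for packet size N and q = Q^{-1}(eps). *)
Definition Ffun (N q m g : R) : R :=
  sqrt (/ m * (1 - / ((g + 1) ^ 2))) * q / ln 2 - log2 (1 + g) + N / m.

From Stdlib Require Import Reals Lra Psatz.
From Coquelicot Require Import Coquelicot.
Open Scope R_scope.

(* Write c = N ln 2 and V g = 1 - 1/(1 + g)^2.  The constraint F(m, g) = 0 says that
   m ln(1 + g) - q sqrt m sqrt(V g) = c.  For fixed g this is a quadratic a t^2 - b t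
   with a > 0, both in t = sqrt m and in t = sqrt (m g), and such a quadratic increases to
   the right of any point where it is positive.
   Let m1 < m2 and g_i = Gamma m_i.  First g2 < g1: otherwise, at blocklength m2 the rate
   ln(1 + g) - (q / sqrt m2) sqrt(V g) would be larger at g1 than at g2, whereas its
   derivative is positive wherever the rate is positive.  Next, with s = q / sqrt (m1 g1),
   the nats per unit of energy ln(1 + g)/g - s sqrt(g + 2)/(1 + g) have negative derivative
   in g wherever they are at least kappa s^2, kappa = (4 - sqrt 2)^2 / 4, and the
   hypothesis on q / sqrt N, which reads kappa q^2 <= c, puts g1 in that region.  So the
   efficiency is larger at g2 than at g1, and m1 g1 <= m2 g2 would make the quadratic in
   sqrt (m g) exceed c at (m2, g2).
   The argument works for every real q. *)

Lemma exists_right_gt_of_deriv_pos f x l y :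
  derivable_pt_lim f x l -> 0 < l -> x < y -> exists t, x < t < y /\ f x < f t.
Proof.
  intros Hf Hl Hxy.
  destruct (Hf l Hl) as [d Hd]. pose proof (cond_pos d).
  set (h := Rmin (d / 2) ((y - x) / 2)).
  assert (Hh : 0 < h) by (apply Rmin_glb_lt; lra).
  assert (Hhd : h < d) by (pose proof (Rmin_l (d / 2) ((y - x) / 2)); unfold h in *; lra).
  assert (Hhy : h < y - x) by (pose proof (Rmin_r (d / 2) ((y - x) / 2)); unfold h in *; lra).
  specialize (Hd h ltac:(lra) ltac:(rewrite Rabs_pos_eq; lra)).
  exists (x + h); split; [lra|].
  apply Rabs_def2 in Hd.
  assert (Hq : 0 < (f (x + h) - f x) / h) by lra.
  apply (Rmult_lt_compat_r h) in Hq; [|lra].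
  field_simplify in Hq; lra.
Qed.

Lemma lt_of_deriv_pos_above f f' K x y : x < y ->
  (forall z, x <= z <= y -> derivable_pt_lim f z (f' z)) ->
  (forall z, x <= z <= y -> K <= f z -> 0 < f' z) ->
  K <= f x -> f x < f y.
Proof.
  intros Hxy Hd Hpos Hfx.
  destruct (Rlt_or_le (f x) (f y)) as [H|Hyx]; [exact H|exfalso].
  destruct (continuity_ab_maj f x y) as [w [Hmax Hw]]; [lra| |].
  { intros z Hz. apply derivable_continuous_pt. exists (f' z). now apply Hd. }
  (* A maximum at y is, since f y <= f x, also attained at x. *)
  assert (Hmax' : exists v, x <= v < y /\ forall z, x <= z <= y -> f z <= f v).
  { destruct (Req_dec w y) as [->|Hwy].
    - exists x. split; [lra|]. intros z Hz. specialize (Hmax z Hz). lra.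
    - exists w. split; [lra|exact Hmax]. }
  destruct Hmax' as [v [Hv Hmaxv]].
  assert (Hfv : K <= f v) by (specialize (Hmaxv x ltac:(lra)); lra).
  destruct (exists_right_gt_of_deriv_pos f v (f' v) y) as [t [Ht Hft]];
    [apply Hd; lra | apply Hpos; lra | lra |].
  specialize (Hmaxv t ltac:(lra)). lra.
Qed.

Lemma lt_of_deriv_neg_above f f' K x y : x < y ->
  (forall z, x <= z <= y -> derivable_pt_lim f z (f' z)) ->
  (forall z, x <= z <= y -> K <= f z -> f' z < 0) ->
  K <= f y -> f y < f x.
Proof.
  intros Hxy Hd Hneg Hfy.
  rewrite <- (Ropp_involutive x), <- (Ropp_involutive y).
  apply (lt_of_deriv_pos_above (mirr_fct f) (fun z => - f' (- z)) K); [lra| | |].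
  - intros z Hz. apply derivable_pt_lim_mirr_fwd. rewrite Ropp_involutive. apply Hd. lra.
  - intros z Hz Hfz. assert (f' (- z) < 0) by (apply Hneg; [lra|exact Hfz]). lra.
  - unfold mirr_fct. now rewrite Ropp_involutive.
Qed.

Lemma le_of_deriv_nonneg f f' a b : a <= b ->
  (forall c, a <= c <= b -> derivable_pt_lim f c (f' c)) ->
  (forall c, a <= c <= b -> 0 <= f' c) -> f a <= f b.
Proof.
  intros Hab Hd Hpos.
  destruct (Req_dec a b) as [->|Hne]; [lra|].
  destruct (MVT_cor2 f f' a b) as [c [Hc Hcab]]; [lra|intros; apply Hd; lra|].
  specialize (Hpos c ltac:(lra)). nra.
Qed.

Lemma quad_lt_of_pos a b t r : 0 < a -> 0 < t < r ->
  0 < a * t ^ 2 - b * t -> a * t ^ 2 - b * t < a * r ^ 2 - b * r.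
Proof.
  intros Ha Htr Hpos.
  assert (Hb : b < a * t).
  { replace (a * t ^ 2 - b * t) with (t * (a * t - b)) in Hpos by ring. nra. }
  replace (a * r ^ 2 - b * r) with (a * t ^ 2 - b * t + (r - t) * (a * (r + t) - b)) by ring.
  assert (0 < (r - t) * (a * (r + t) - b)) by (apply Rmult_lt_0_compat; nra).
  lra.
Qed.

Lemma quad_le_of_pos a b t r : 0 < a -> 0 < t <= r ->
  0 < a * t ^ 2 - b * t -> a * t ^ 2 - b * t <= a * r ^ 2 - b * r.
Proof.
  intros Ha Htr Hpos. destruct (Req_dec t r) as [->|Hne]; [lra|].
  apply Rlt_le, quad_lt_of_pos; lra.
Qed.

Lemma ln_1p_pos x : 0 < x -> 0 < ln (1 + x).
Proof. intros Hx. rewrite <- ln_1. apply ln_increasing; lra. Qed.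

Lemma ln_1p_ge x : 0 <= x -> 2 * x / (2 + x) <= ln (1 + x).
Proof.
  intros Hx.
  apply (le_of_deriv_nonneg (fun t => ln (1 + t) - 2 * t / (2 + t))
    (fun t => t ^ 2 / ((1 + t) * (2 + t) ^ 2)) 0 x) in Hx.
  - rewrite Rplus_0_r, ln_1 in Hx. lra.
  - intros c Hc. apply is_derive_Reals. auto_derive; [lra|field; lra].
  - intros c Hc. apply Rdiv_le_0_compat; [nra|]. apply Rmult_lt_0_compat; nra.
Qed.

Lemma ln_1p_le x : 0 <= x -> ln (1 + x) <= x * (6 + x) / (6 + 4 * x).
Proof.
  intros Hx.
  apply (le_of_deriv_nonneg (fun t => t * (6 + t) / (6 + 4 * t) - ln (1 + t))
    (fun t => 4 * t ^ 3 / ((1 + t) * (6 + 4 * t) ^ 2)) 0 x) in Hx.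
  - rewrite !Rplus_0_r, ln_1 in Hx. lra.
  - intros c Hc. apply is_derive_Reals. auto_derive; [lra|field; lra].
  - intros c Hc. apply Rdiv_le_0_compat; [nra|]. apply Rmult_lt_0_compat; nra.
Qed.

Lemma ln_1p_lt x : 0 < x -> ln (1 + x) < x.
Proof.
  intros Hx. rewrite <- (ln_exp x) at 2.
  apply ln_increasing; [lra|]. apply exp_ineq1. lra.
Qed.

Lemma ln_1p_ge_2 x : 8 <= x -> 2 <= ln (1 + x).
Proof.
  intros Hx. rewrite <- (ln_exp 2). apply ln_le; [apply exp_pos|].
  replace 2 with (1 + 1) by lra. rewrite exp_plus.
  pose proof exp_le_3. pose proof (exp_pos 1). nra.
Qed.

(* [disp_sqrt g] is the square root of the channel dispersion 1 - 1/(1 + g)^2. *)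
Definition disp_sqrt (g : R) : R := sqrt g * sqrt (g + 2) / (1 + g).

Definition normal_nats (q m g : R) : R := m * ln (1 + g) - q * sqrt m * disp_sqrt g.

Definition normal_rate (a g : R) : R := ln (1 + g) - a * disp_sqrt g.

Definition normal_rate' (a g : R) : R :=
  / (1 + g) - a / (sqrt g * sqrt (g + 2) * (1 + g) ^ 2).

Definition efficiency (s g : R) : R := ln (1 + g) / g - s * sqrt (g + 2) / (1 + g).

Definition efficiency' (s g : R) : R :=
  - (ln (1 + g) - g / (1 + g)) / g ^ 2 + s * (g + 3) / (2 * sqrt (g + 2) * (1 + g) ^ 2).

Lemma normal_nats_of_Ffun_eq0 N q m g : 0 < m -> 0 <= g -> Ffun N q m g = 0 ->
  normal_nats q m g = N * ln 2.
Proof.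
  intros Hm Hg HF. unfold normal_nats.
  pose proof ln_lt_2.
  assert (Ht : 0 < sqrt m) by (apply sqrt_lt_R0; lra).
  assert (Htt : sqrt m * sqrt m = m) by (apply sqrt_sqrt; lra).
  assert (Hd0 : 0 <= disp_sqrt g).
  { unfold disp_sqrt. apply Rmult_le_pos; [apply Rmult_le_pos; apply sqrt_pos|].
    apply Rlt_le, Rinv_0_lt_compat; lra. }
  assert (Hdisp : / m * (1 - / (g + 1) ^ 2) = (disp_sqrt g / sqrt m) ^ 2).
  { unfold disp_sqrt, Rdiv. rewrite !Rpow_mult_distr, !pow_inv, !pow2_sqrt by lra.
    field. lra. }
  unfold Ffun, log2 in HF. rewrite Hdisp, sqrt_pow2 in HF by (apply Rdiv_le_0_compat; lra).
  set (t := sqrt m) in *. set (d := disp_sqrt g) in *. clearbody t d. subst m.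
  apply (Rmult_eq_compat_r (t * t * ln 2)) in HF.
  field_simplify in HF; [lra|lra].
Qed.

Lemma normal_nats_sqrt q m g : 0 <= m ->
  normal_nats q m g = ln (1 + g) * sqrt m ^ 2 - q * disp_sqrt g * sqrt m.
Proof. intros Hm. unfold normal_nats. rewrite pow2_sqrt by lra. ring. Qed.

Lemma normal_nats_rate q m g : 0 < m -> normal_nats q m g = m * normal_rate (q / sqrt m) g.
Proof.
  intros Hm. unfold normal_nats, normal_rate.
  pose proof (sqrt_lt_R0 m Hm).
  rewrite <- (sqrt_sqrt m) at 1 3 by lra. field. lra.
Qed.

Lemma normal_nats_sqrt_energy q m g : 0 <= m -> 0 < g ->
  normal_nats q m g
  = ln (1 + g) / g * sqrt (m * g) ^ 2 - q * (sqrt (g + 2) / (1 + g)) * sqrt (m * g).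
Proof.
  intros Hm Hg. unfold normal_nats, disp_sqrt.
  rewrite pow2_sqrt, sqrt_mult by nra. field. lra.
Qed.

Lemma efficiency_scale q t g : 0 < t -> 0 < g ->
  t ^ 2 * efficiency (q / t) g
  = ln (1 + g) / g * t ^ 2 - q * (sqrt (g + 2) / (1 + g)) * t.
Proof. intros Ht Hg. unfold efficiency. field. lra. Qed.

Lemma derivable_pt_lim_normal_rate a g : 0 < g ->
  derivable_pt_lim (normal_rate a) g (normal_rate' a g).
Proof.
  intros Hg. apply is_derive_Reals. unfold normal_rate, normal_rate', disp_sqrt.
  assert (Hu : sqrt g ^ 2 = g) by (apply pow2_sqrt; lra).
  assert (Hv : sqrt (g + 2) ^ 2 = g + 2) by (apply pow2_sqrt; lra).
  pose proof (sqrt_lt_R0 g Hg). pose proof (sqrt_lt_R0 (g + 2) ltac:(lra)).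
  auto_derive; [repeat split; lra|].
  field_simplify_eq; [|repeat split; lra].
  rewrite Hu, Hv. ring.
Qed.

Lemma derivable_pt_lim_efficiency s g : 0 < g ->
  derivable_pt_lim (efficiency s) g (efficiency' s g).
Proof.
  intros Hg. apply is_derive_Reals. unfold efficiency, efficiency'.
  pose proof (sqrt_lt_R0 (g + 2) ltac:(lra)). pose proof (sqrt_sqrt (g + 2) ltac:(lra)).
  auto_derive; [repeat split; lra|].
  replace (g + 3) with (2 * (sqrt (g + 2) * sqrt (g + 2)) - (1 + g)) by lra.
  field. repeat split; lra.
Qed.

Lemma normal_rate'_pos a g : 0 < g -> 0 < normal_rate a g -> 0 < normal_rate' a g.
Proof.
  unfold normal_rate, normal_rate', disp_sqrt. intros Hg Hrate.
  assert (Hp : sqrt g * sqrt (g + 2) * (sqrt g * sqrt (g + 2)) = g * (g + 2)).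
  { rewrite <- sqrt_mult by lra. apply sqrt_sqrt. nra. }
  assert (Hp0 : 0 < sqrt g * sqrt (g + 2)).
  { apply Rmult_lt_0_compat; apply sqrt_lt_R0; lra. }
  set (p := sqrt g * sqrt (g + 2)) in *.
  assert (Hap : a * p < g * (1 + g)).
  { pose proof (ln_1p_lt g Hg).
    replace (a * p) with (a * (p / (1 + g)) * (1 + g)) by (field; lra).
    apply Rmult_lt_compat_r; lra. }
  assert (Ha : a < p * (1 + g)) by nra.
  replace (/ (1 + g) - a / (p * (1 + g) ^ 2)) with ((p * (1 + g) - a) / (p * (1 + g) ^ 2))
    by (field; lra).
  apply Rdiv_lt_0_compat; nra.
Qed.

Lemma efficiency'_neg_of s g : 0 < g ->
  s * (g + 3) * g ^ 2 < 2 * sqrt (g + 2) * (1 + g) * ((1 + g) * ln (1 + g) - g) ->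
  efficiency' s g < 0.
Proof.
  intros Hg H. pose proof (sqrt_lt_R0 (g + 2) ltac:(lra)).
  set (D := 2 * sqrt (g + 2) * (1 + g) ^ 2 * g ^ 2).
  assert (HD : 0 < D) by (unfold D; repeat apply Rmult_lt_0_compat; nra).
  assert (Hnum : efficiency' s g * D =
    s * (g + 3) * g ^ 2 - 2 * sqrt (g + 2) * (1 + g) * ((1 + g) * ln (1 + g) - g))
    by (unfold efficiency', D; field; lra).
  nra.
Qed.

Lemma efficiency'_neg_of_small s g : 0 < g ->
  s * (g + 3) * (g + 2) < 2 * sqrt (g + 2) * (1 + g) -> efficiency' s g < 0.
Proof.
  intros Hg H. apply efficiency'_neg_of; [exact Hg|].
  pose proof (ln_1p_ge g ltac:(lra)) as Hln.
  assert (Hgap : g ^ 2 <= (g + 2) * ((1 + g) * ln (1 + g) - g)).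
  { apply (Rmult_le_compat_l (2 + g)) in Hln; [|lra].
    replace ((2 + g) * (2 * g / (2 + g))) with (2 * g) in Hln by (field; lra). nra. }
  pose proof (sqrt_lt_R0 (g + 2) ltac:(lra)).
  apply (Rmult_lt_reg_l (g + 2)); [lra|].
  apply (Rlt_le_trans _ (2 * sqrt (g + 2) * (1 + g) * g ^ 2)).
  - replace ((g + 2) * (s * (g + 3) * g ^ 2)) with (s * (g + 3) * (g + 2) * g ^ 2) by ring.
    apply Rmult_lt_compat_r; nra.
  - replace ((g + 2) * (2 * sqrt (g + 2) * (1 + g) * ((1 + g) * ln (1 + g) - g)))
      with (2 * sqrt (g + 2) * (1 + g) * ((g + 2) * ((1 + g) * ln (1 + g) - g))) by ring.
    apply Rmult_le_compat_l; nra.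
Qed.

Lemma efficiency'_neg_of_large s g : 8 <= g -> 0 <= efficiency s g -> efficiency' s g < 0.
Proof.
  unfold efficiency. intros Hg Heff. apply efficiency'_neg_of; [lra|].
  pose proof (ln_1p_ge_2 g Hg) as Hln.
  pose proof (sqrt_lt_R0 (g + 2) ltac:(lra)).
  pose proof (sqrt_sqrt (g + 2) ltac:(lra)) as Hw.
  set (w := sqrt (g + 2)) in *. set (l := ln (1 + g)) in *.
  assert (Hs : s * w * g <= l * (1 + g)).
  { replace (s * w * g) with (s * w / (1 + g) * (g * (1 + g))) by (field; lra).
    replace (l * (1 + g)) with (l / g * (g * (1 + g))) by (field; lra).
    apply Rmult_le_compat_r; nra. }
  apply (Rmult_lt_reg_r w); [lra|].
  replace (s * (g + 3) * g ^ 2 * w) with (s * w * g * ((g + 3) * g)) by ring.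
  replace (2 * w * (1 + g) * ((1 + g) * l - g) * w)
    with (2 * (w * w) * (1 + g) * ((1 + g) * l - g)) by ring.
  rewrite Hw.
  apply (Rle_lt_trans _ (l * (1 + g) * ((g + 3) * g))); [apply Rmult_le_compat_r; nra|].
  assert (H2 : 2 * g * (g + 2) < l * (g * g + 3 * g + 4)) by nra.
  nra.
Qed.

(* 93/200 lies just below sqrt 2 / 3, the value of s where [efficiency' s] changes sign
   at g = 0, and just high enough for [efficiency_lt_kappa_sq]. *)
Lemma efficiency'_neg_le8 s g : 0 < g <= 8 -> s < 93 / 200 -> efficiency' s g < 0.
Proof.
  intros Hg Hs. apply efficiency'_neg_of_small; [lra|].
  pose proof (sqrt_sqrt (g + 2) ltac:(lra)) as Hw. pose proof (sqrt_lt_R0 (g + 2) ltac:(lra)).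
  set (w := sqrt (g + 2)) in *.
  apply (Rlt_trans _ (93 / 200 * (g + 3) * (g + 2))); [apply Rmult_lt_compat_r; nra|].
  apply Rsqr_incrst_0; unfold Rsqr; [|nra|nra].
  assert (Hcubic : (93 / 200) ^ 2 * (g + 3) ^ 2 * (g + 2) < 4 * (1 + g) ^ 2) by nra.
  replace (2 * w * (1 + g) * (2 * w * (1 + g))) with (4 * (w * w) * (1 + g) ^ 2) by ring.
  rewrite Hw. nra.
Qed.

Definition kappa : R := (4 - sqrt 2) ^ 2 / 4.

Lemma kappa_ge : 36143 / 100000 <= kappa * (93 / 200) ^ 2.
Proof.
  unfold kappa. pose proof (sqrt_sqrt 2 ltac:(lra)). pose proof (sqrt_lt_R0 2 ltac:(lra)).
  assert (sqrt 2 < 141422 / 100000) by nra.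
  nra.
Qed.

Lemma efficiency_lt_kappa_sq s g : 0 < g -> 93 / 200 <= s -> efficiency s g < kappa * s ^ 2.
Proof.
  unfold efficiency. intros Hg Hs.
  pose proof (sqrt_sqrt (g + 2) ltac:(lra)) as Hw. pose proof (sqrt_lt_R0 (g + 2) ltac:(lra)).
  set (w := sqrt (g + 2)) in *.
  assert (Hln : ln (1 + g) / g <= (6 + g) / (6 + 4 * g)).
  { pose proof (ln_1p_le g ltac:(lra)).
    apply (Rmult_le_reg_r g); [lra|].
    replace (ln (1 + g) / g * g) with (ln (1 + g)) by (field; lra).
    replace ((6 + g) / (6 + 4 * g) * g) with (g * (6 + g) / (6 + 4 * g)) by (field; lra).
    lra. }
  assert (Hs_w : 93 / 200 * w / (1 + g) <= s * w / (1 + g)).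
  { unfold Rdiv. apply Rmult_le_compat_r; [apply Rlt_le, Rinv_0_lt_compat; lra|].
    apply Rmult_le_compat_r; lra. }
  assert (Hpade : (6 + g) / (6 + 4 * g) - 93 / 200 * w / (1 + g) < 36143 / 100000).
  { assert (Hsq : ((6 + g) - 36143 / 100000 * (6 + 4 * g)) * (1 + g) < 93 / 200 * w * (6 + 4 * g)).
    { destruct (Rle_or_lt ((6 + g) - 36143 / 100000 * (6 + 4 * g)) 0); [nra|].
      apply Rsqr_incrst_0; unfold Rsqr; nra. }
    apply (Rmult_lt_reg_r ((6 + 4 * g) * (1 + g))); [nra|].
    field_simplify; [nra|lra]. }
  pose proof kappa_ge.
  assert (kappa * (93 / 200) ^ 2 <= kappa * s ^ 2) by (apply Rmult_le_compat_l; nra).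
  lra.
Qed.

Lemma efficiency'_neg s g : 0 < g ->
  (0 < s -> kappa * s ^ 2 <= efficiency s g) -> efficiency' s g < 0.
Proof.
  intros Hg Heff.
  destruct (Rle_or_lt (93 / 200) s) as [Hs|Hs].
  { pose proof (efficiency_lt_kappa_sq s g Hg Hs). specialize (Heff ltac:(lra)). lra. }
  destruct (Rle_or_lt g 8) as [Hg8|Hg8]; [apply efficiency'_neg_le8; lra|].
  apply efficiency'_neg_of_large; [lra|].
  destruct (Rle_or_lt s 0) as [Hs0|Hs0].
  - unfold efficiency.
    assert (0 < ln (1 + g) / g).
    { apply Rdiv_lt_0_compat; [apply ln_1p_pos|]; lra. }
    assert (s * sqrt (g + 2) / (1 + g) <= 0).
    { unfold Rdiv. rewrite Rmult_assoc.
      assert (0 <= sqrt (g + 2) * / (1 + g)).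
      { apply Rmult_le_pos; [apply sqrt_pos|apply Rlt_le, Rinv_0_lt_compat; lra]. }
      nra. }
    lra.
  - specialize (Heff Hs0). assert (0 <= kappa * s ^ 2); [|lra].
    pose proof kappa_ge. nra.
Qed.

Lemma snr_lt_of_blocklength_lt q c m1 m2 g1 g2 : 0 < c -> 0 < m1 < m2 -> 0 < g1 -> 0 < g2 ->
  normal_nats q m1 g1 = c -> normal_nats q m2 g2 = c -> g2 < g1.
Proof.
  intros Hc Hm Hg1 Hg2 E1 E2.
  set (a := q / sqrt m2).
  assert (H1 : c < m2 * normal_rate a g1).
  { unfold a. rewrite <- normal_nats_rate, <- E1, !normal_nats_sqrt by lra.
    apply quad_lt_of_pos; [apply ln_1p_pos; lra| |].
    - split; [apply sqrt_lt_R0|apply sqrt_lt_1]; lra.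
    - rewrite <- normal_nats_sqrt, E1 by lra. exact Hc. }
  rewrite normal_nats_rate in E2 by lra. fold a in E2.
  destruct (Rlt_or_le g2 g1) as [Hlt|Hle]; [exact Hlt|exfalso].
  assert (Hne : g1 <> g2) by (intros ->; lra).
  assert (Hc2 : c / m2 <= normal_rate a g1).
  { apply (Rmult_le_reg_l m2); [lra|]. field_simplify; lra. }
  assert (Hincr : normal_rate a g1 < normal_rate a g2).
  { apply (lt_of_deriv_pos_above _ (normal_rate' a) (c / m2)); [lra| | |exact Hc2].
    - intros z Hz. apply derivable_pt_lim_normal_rate. lra.
    - intros z Hz Hz'. apply normal_rate'_pos; [lra|].
      assert (0 < c / m2) by (apply Rdiv_lt_0_compat; lra). lra. }
  assert (m2 * normal_rate a g1 < m2 * normal_rate a g2) by (apply Rmult_lt_compat_l; lra).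
  lra.
Qed.

Lemma energy_lt_of_snr_lt q c m1 m2 g1 g2 : 0 < c -> (0 < q -> kappa * q ^ 2 <= c) ->
  0 < m1 -> 0 < m2 -> 0 < g2 < g1 ->
  normal_nats q m1 g1 = c -> normal_nats q m2 g2 = c -> m2 * g2 < m1 * g1.
Proof.
  intros Hc Hkappa Hm1 Hm2 Hg E1 E2.
  rewrite normal_nats_sqrt_energy in E1, E2 by lra.
  destruct (Rlt_or_le (m2 * g2) (m1 * g1)) as [Hlt|Hle]; [exact Hlt|exfalso].
  assert (Ht : 0 < sqrt (m1 * g1) <= sqrt (m2 * g2)).
  { split; [apply sqrt_lt_R0; nra|apply sqrt_le_1_alt; lra]. }
  set (t1 := sqrt (m1 * g1)) in *. set (t2 := sqrt (m2 * g2)) in *. set (s := q / t1).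
  rewrite <- efficiency_scale in E1 by lra. fold s in E1.
  assert (Hdecr : efficiency s g1 < efficiency s g2).
  { apply (lt_of_deriv_neg_above _ (efficiency' s) (efficiency s g1)); [lra| | |lra].
    - intros z Hz. apply derivable_pt_lim_efficiency. lra.
    - intros z Hz Hz'. apply efficiency'_neg; [lra|]. intros Hs.
      assert (Hq : 0 < q).
      { unfold s in Hs. apply (Rmult_lt_reg_r (/ t1)); [apply Rinv_0_lt_compat; lra|]. lra. }
      apply (Rle_trans _ (efficiency s g1)); [|exact Hz'].
      apply (Rmult_le_reg_l (t1 ^ 2)); [nra|]. rewrite E1.
      replace (t1 ^ 2 * (kappa * s ^ 2)) with (kappa * q ^ 2) by (unfold s; field; lra).
      exact (Hkappa Hq). }
  assert (Hc2 : c < ln (1 + g2) / g2 * t1 ^ 2 - q * (sqrt (g2 + 2) / (1 + g2)) * t1).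
  { rewrite <- efficiency_scale, <- E1 by lra. fold s. apply Rmult_lt_compat_l; nra. }
  assert (ln (1 + g2) / g2 * t1 ^ 2 - q * (sqrt (g2 + 2) / (1 + g2)) * t1
          <= ln (1 + g2) / g2 * t2 ^ 2 - q * (sqrt (g2 + 2) / (1 + g2)) * t2).
  { apply quad_le_of_pos; [|lra|lra]. apply Rdiv_lt_0_compat; [apply ln_1p_pos|]; lra. }
  lra.
Qed.

Lemma kappa_sq_le N q : 0 < N -> q / sqrt N <= 2 * sqrt (ln 2) / (4 - sqrt 2) ->
  0 < q -> kappa * q ^ 2 <= N * ln 2.
Proof.
  intros HN Hcond Hq.
  assert (Hl2 : 0 < ln 2) by (pose proof ln_lt_2; lra).
  assert (Hr : 0 < sqrt N) by (apply sqrt_lt_R0; lra).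
  assert (Hs2 : sqrt 2 < 4) by (rewrite <- sqrt_Rsqr with (x := 4) by lra;
                                apply sqrt_lt_1; unfold Rsqr; lra).
  set (k := 2 * sqrt (ln 2) / (4 - sqrt 2)) in *.
  assert (Hk : kappa * k ^ 2 = ln 2).
  { unfold kappa, k. unfold Rdiv. rewrite !Rpow_mult_distr, pow_inv, pow2_sqrt by lra.
    field. lra. }
  assert (HqN : q <= k * sqrt N).
  { apply (Rmult_le_compat_r (sqrt N)) in Hcond; [|lra].
    unfold Rdiv in Hcond. rewrite Rmult_assoc, Rinv_l, Rmult_1_r in Hcond by lra. exact Hcond. }
  assert (Hsq : q ^ 2 <= k ^ 2 * N).
  { rewrite <- (pow2_sqrt N), <- Rpow_mult_distr by lra. apply pow_incr. lra. }
  assert (Hkappa : 0 < kappa).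
  { unfold kappa. apply Rdiv_lt_0_compat; [apply pow_lt|]; lra. }
  rewrite <- Hk. nra.
Qed.

Theorem lemma1 (N eps mhat q : R) (Gamma : R -> R)
  (HN : 0 < N) (Heps0 : 0 < eps) (Heps1 : eps < 1) (Hmhat : 0 < mhat)
  (Hq : Qfun q = eps)
  (HGamma : forall m, 0 < m -> 0 < Gamma m /\ Ffun N q m (Gamma m) = 0)
  (Hcond : q / sqrt N <= 2 * sqrt (ln 2) / (4 - sqrt 2)) :
  forall m1 m2, mhat <= m1 -> m1 < m2 -> m2 * Gamma m2 < m1 * Gamma m1.
Proof.
  intros m1 m2 Hm1 H12.
  destruct (HGamma m1 ltac:(lra)) as [Hg1 F1].
  destruct (HGamma m2 ltac:(lra)) as [Hg2 F2].
  apply normal_nats_of_Ffun_eq0 in F1, F2; try lra.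
  assert (Hc : 0 < N * ln 2) by (pose proof ln_lt_2; nra).
  assert (Hg21 : Gamma m2 < Gamma m1)
    by (apply (snr_lt_of_blocklength_lt q (N * ln 2) m1 m2); lra).
  apply (energy_lt_of_snr_lt q (N * ln 2)); try lra.
  now apply kappa_sq_le.
Qed.
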